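(* For every graph $G$ and every integer $k\ge 0$, $\pi^*(G+K_k)=\pi^*(G)+k$.
   Context: All graphs are finite and simple. $A+B$ denotes the complete join of graphs $A$ and $B$: the disjoint union of $A$ and $B$ together with all edges between $V(A)$ and $V(B)$; $K_k$ is the complete graph on $k$ vertices. A lazy walk in a graph $G$ is a sequence of vertices $v_1,\dots,v_m$ such that for each $i<m$, either $v_iv_{i+1}\in E(G)$ or $v_i=v_{i+1}$. For a colouring $\phi$ of $V(G)$, a lazy walk $v_1,\dots,v_{2t}$ is $\phi$-repetitive if $\phi(v_i)=\phi(v_{i+t})$ for each $i\in\{1,\dots,t\}$. A colouring $\phi$ is strongly nonrepetitive if for every $\phi$-repetitive lazy walk $v_1,\dots,v_{2t}$ there exists $i\in\{1,\dots,t\}$ with $v_i=v_{i+t}$. $\pi^*(G)$ denotes the minimum number of colours in a strongly nonrepetitive colouring of $G$. *)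

From mathcomp Require Import all_boot.
From Stdlib Require Import ClassicalEpsilon.
Set Implicit Arguments. Unset Strict Implicit. Unset Printing Implicit Defensive.

(* A finite simple graph: vertex type V : finType with a symmetric,
   irreflexive adjacency relation e (these hypotheses are in the theorem). *)

Definition lazy_step (V : finType) (e : rel V) (x y : V) : Prop :=
  e x y \/ x = y.

Definition lazy_walk (V : finType) (e : rel V) (m : nat) (w : nat -> V) : Prop :=
  forall i, i.+1 < m -> lazy_step e (w i) (w i.+1).

Definition repetitive (V : finType) (C : Type) (phi : V -> C) (t : nat) (w : nat -> V) : Prop :=
  forall i, i < t -> phi (w i) = phi (w (i + t)).

Definition strongly_nonrep (V : finType) (e : rel V) (C : Type) (phi : V -> C) : Prop :=
  forall (t : nat) (w : nat -> V), 0 < t ->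
    lazy_walk e (t + t) w -> repetitive phi t w ->
    exists i, i < t /\ w i = w (i + t).

Definition snr_colourable (V : finType) (e : rel V) (c : nat) : Prop :=
  exists phi : V -> nat, (forall v, phi v < c) /\ strongly_nonrep e phi.

Definition pb (P : Prop) : bool :=
  if excluded_middle_informative P then true else false.

Lemma pbP (P : Prop) : reflect P (pb P).
Proof. rewrite /pb; case: excluded_middle_informative => h; by constructor. Qed.

Lemma snr_colourable_exists (V : finType) (e : rel V) :
  exists c, pb (snr_colourable e c).
Proof.
exists #|V|; apply/pbP; exists (fun v => nat_of_ord (enum_rank v)); split.
  by move=> v; exact: ltn_ord.
move=> t w t0 _ rep; exists 0; split => //.
have := rep 0 t0 => /= h; apply: enum_rank_inj; exact: val_inj.
Qed.

Definition pistar (V : finType) (e : rel V) : nat :=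
  ex_minn (snr_colourable_exists e).

Definition join_complete (V : finType) (e : rel V) (k : nat) : rel (V + 'I_k)%type :=
  fun x y => match x, y with
  | inl a, inl b => e a b
  | inr i, inr j => i != j
  | _, _ => true
  end.
Arguments join_complete [V] e k.

From mathcomp Require Import all_boot zify.
From Stdlib Require Import ClassicalEpsilon.
Set Implicit Arguments. Unset Strict Implicit. Unset Printing Implicit Defensive.

(* Upper bound: extend an optimal colouring of G by k fresh colours, one per
   apex of K_k.  A vertex carrying a colour used nowhere else is repeated by
   every repetitive lazy walk through it, so a repetitive walk visiting an
   apex is harmless; a walk avoiding the apices is a walk of G.

   Lower bound: every apex dominates G + K_k, and a dominating vertex gets a
   colour shared with no other vertex (look at the walk x, y).  So the k apex
   colours are pairwise distinct and unused on G.  Restricting the colouring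
   to G (an injective homomorphism pulls strong nonrepetitiveness back) and
   renumbering the remaining colours order-preservingly into {0..c-k-1}
   (an injective recolouring preserves it) gives a colouring of G with
   c - k colours. *)

Lemma pistar_spec (V : finType) (e : rel V) : snr_colourable e (pistar e).
Proof. by rewrite /pistar; case: ex_minnP => m /pbP. Qed.

Lemma pistar_min (V : finType) (e : rel V) (c : nat) :
  snr_colourable e c -> pistar e <= c.
Proof. by rewrite /pistar; case: ex_minnP => m _ min_m /pbP; apply: min_m. Qed.

Lemma unique_colour_repeats (W : finType) (C : Type) (phi : W -> C)
    (t j : nat) (w : nat -> W) :
  repetitive phi t w -> j < t + t ->
  (forall y, phi y = phi (w j) -> y = w j) ->
  exists i, i < t /\ w i = w (i + t).
Proof.
move=> rep lt_j uniq_j; case: (ltnP j t) => [lt_jt | le_tj].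
  by exists j; split => //; apply/esym/uniq_j; rewrite -(rep j lt_jt).
exists (j - t); split; first lia.
have jE : j - t + t = j by lia.
by rewrite jE; apply: uniq_j; rewrite -{2}jE -rep //; lia.
Qed.

Lemma dominating_colour_unique (W : finType) (e : rel W) (C : Type)
    (psi : W -> C) (x : W) :
  strongly_nonrep e psi -> (forall y, y <> x -> e x y) ->
  forall y, psi y = psi x -> y = x.
Proof.
move=> snr dom y psi_yx; pose w n := if n == 0 then x else y.
have [i [lt_i1 w_i]] : exists i, i < 1 /\ w i = w (i + 1).
  apply: snr => // [j lt_j | j lt_j]; have -> : j = 0 by lia.
    rewrite /lazy_step /w /=.
    by case: (eqVneq y x) => [->|/eqP ne]; [right | left; apply: dom].
  by rewrite /w /= psi_yx.
have i0 : i = 0 by lia.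
by move: w_i; rewrite i0 /w /= => ->.
Qed.

Lemma strongly_nonrep_hom (V W : finType) (e : rel V) (f : rel W)
    (C : Type) (h : V -> W) (psi : W -> C) :
  injective h -> (forall x y, e x y -> f (h x) (h y)) ->
  strongly_nonrep f psi -> strongly_nonrep e (psi \o h).
Proof.
move=> inj_h hom snr t w t_gt0 walk rep.
have [i [lt_i w_i]] : exists i, i < t /\ h (w i) = h (w (i + t)).
  apply: snr => // j lt_j.
  by case: (walk j lt_j) => [ej | ->]; [left; apply: hom | right].
by exists i; split => //; apply: inj_h.
Qed.

Lemma strongly_nonrep_recolour (V : finType) (e : rel V) (C D : Type)
    (phi : V -> C) (g : C -> D) :
  (forall u v, g (phi u) = g (phi v) -> phi u = phi v) ->
  strongly_nonrep e phi -> strongly_nonrep e (g \o phi).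
Proof.
move=> inj_g snr t w t_gt0 walk rep; apply: snr => // i lt_i.
exact: inj_g (rep i lt_i).
Qed.

(* rank_out S x is the number of colours below x that are not in S; it
   renumbers the colours outside S order-preservingly from 0. *)
Definition rank_out (S : seq nat) (x : nat) : nat :=
  count (fun z => z \notin S) (iota 0 x).

Lemma rank_out_lt (S : seq nat) (x y : nat) :
  x < y -> x \notin S -> rank_out S x < rank_out S y.
Proof.
move=> lt_xy x_out; rewrite /rank_out.
have -> : y = x + (y - x - 1).+1 by lia.
by rewrite iotaD count_cat add0n /= x_out; lia.
Qed.

Lemma rank_out_inj (S : seq nat) (x y : nat) :
  x \notin S -> y \notin S -> rank_out S x = rank_out S y -> x = y.
Proof.
move=> x_out y_out eq_r; case: (ltngtP x y) => // [lt_xy | lt_yx].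
  by have := rank_out_lt lt_xy x_out; rewrite eq_r ltnn.
by have := rank_out_lt lt_yx y_out; rewrite eq_r ltnn.
Qed.

(* Removing the |S| distinct colours of S from {0..c-1} leaves c - |S|. *)
Lemma rank_out_bound (S : seq nat) (c x : nat) :
  uniq S -> (forall z, z \in S -> z < c) ->
  x < c -> x \notin S -> rank_out S x < c - size S.
Proof.
move=> S_uniq S_lt lt_xc x_out.
have size_in : size S <= count (mem S) (iota 0 c).
  rewrite -size_filter; apply: uniq_leq_size => // z zS.
  by rewrite mem_filter /= zS mem_iota add0n S_lt.
have split_c := count_predC (mem S) (iota 0 c); rewrite size_iota in split_c.
have := rank_out_lt lt_xc x_out; rewrite /rank_out.
have -> : count (fun z => z \notin S) (iota 0 c) = count (predC (mem S)) (iota 0 c)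
  by [].
lia.
Qed.

Lemma join_apex_dominating (V : finType) (e : rel V) (k : nat) (r : 'I_k) :
  forall y, y <> inr r -> join_complete e k (inr r) y.
Proof. by case=> [v | r'] //= ne; apply/eqP => eq_r; apply: ne; rewrite eq_r. Qed.

Lemma snr_colourable_join (V : finType) (e : rel V) (k c : nat) :
  snr_colourable e c -> snr_colourable (join_complete e k) (c + k).
Proof.
move=> [phi [phi_lt snr]].
pose chi (x : V + 'I_k) := match x with inl v => phi v | inr r => c + r end.
have apex_unique r y : chi y = chi (inr r) -> y = inr r.
  case: y => [v | r'] /=; first by have := phi_lt v; lia.
  by move=> eq_c; congr inr; apply: val_inj => /=; lia.
exists chi; split=> [[v | r] | t w t_gt0 walk rep] /=.
- by have := phi_lt v; lia.
- by have := ltn_ord r; lia.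
case: (excluded_middle_informative (exists j r, j < t + t /\ w j = inr r))
  => [[j [r [lt_j w_j]]] | no_apex].
  by apply: (unique_colour_repeats rep lt_j) => y; rewrite w_j; apply: apex_unique.
have in_G j : j < t + t -> exists v, w j = inl v.
  case E: (w j) => [v | r] lt_j; first by exists v.
  by case: no_apex; exists j, r.
have [v0 _] := in_G 0 ltac:(lia).
pose w' j := if w j is inl v then v else v0.
have w_w' j : j < t + t -> w j = inl (w' j) by move/in_G => [v w_j]; rewrite /w' w_j.
have [i [lt_i w'_i]] : exists i, i < t /\ w' i = w' (i + t).
  apply: snr => // j lt_j.
    have := walk j lt_j; rewrite /lazy_step !w_w' //; try lia.
    by case=> [ej | [->]]; [left | right].
  by have := rep j lt_j; rewrite !w_w' //; lia.
by exists i; split => //; rewrite !w_w' ?w'_i //; lia.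
Qed.

Lemma snr_colourable_of_join (V : finType) (e : rel V) (k c : nat) :
  snr_colourable (join_complete e k) c -> k <= c /\ snr_colourable e (c - k).
Proof.
move=> [psi [psi_lt snr]].
have apex_unique (r : 'I_k) :=
  dominating_colour_unique snr (@join_apex_dominating V e k r).
pose S := [seq psi (inr r) | r <- enum 'I_k].
have S_uniq : uniq S.
  rewrite map_inj_uniq ?enum_uniq // => r r' eq_psi.
  by have [] := apex_unique r' (inr r) eq_psi.
have S_size : size S = k by rewrite size_map size_enum_ord.
have S_lt z : z \in S -> z < c by move=> /mapP [r _ ->].
have G_out v : psi (inl v) \notin S.
  by apply/mapP => -[r _ eq_psi]; have := apex_unique r (inl v) eq_psi.
split.
  rewrite -S_size -(size_iota 0 c); apply: uniq_leq_size => // z zS.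
  by rewrite mem_iota add0n S_lt.
exists (rank_out S \o (psi \o inl)); split => [v | ].
  by have := rank_out_bound S_uniq S_lt (psi_lt (inl v)) (G_out v); rewrite S_size.
apply: strongly_nonrep_recolour.
  by move=> u v; apply: rank_out_inj (G_out u) (G_out v).
by apply: strongly_nonrep_hom snr => // u v [].
Qed.

(* The identity holds for every relation e. *)
Theorem mainTheorem9 (V : finType) (e : rel V) (k : nat) :
  symmetric e -> irreflexive e ->
  pistar (join_complete e k) = pistar e + k.
Proof.
move=> _ _; apply/eqP; rewrite eqn_leq; apply/andP; split.
  exact/pistar_min/snr_colourable_join/pistar_spec.
have [le_kc col_G] := snr_colourable_of_join (pistar_spec (join_complete e k)).
by have := pistar_min col_G; lia.
Qed.
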